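(* Let $n\ge2$ and $\mathbf b=(b_1,\dots,b_{n-1})\in\mathbb R^{n-1}$ with $\mathbf b\notin\mathcal W^+_n(1,n-1)$. Then the map $\mathbb R\to\mathbb R^n$, $x\mapsto(x,b_1x,\dots,b_{n-1}x)$, is extremal.
   Context: Sup-norms. For a row vector $\mathbf y\in\mathbb R^k$ and $v>0$, $\mathbf y\in\mathcal W_v(1,k)$ if there are infinitely many $\mathbf q\in\mathbb Z^k$ with $|\mathbf y\mathbf q+p|\le\|\mathbf q\|^{-v}$ for some $p\in\mathbb Z$; $\mathcal W^+_v(1,k)=\bigcup_{u>v}\mathcal W_u(1,k)$. $\mathbf y\in\mathbb R^n$ is very well approximable (VWA) if $\mathbf y\in\mathcal W_v(1,n)$ for some $v>n$; a map is extremal if almost every point of its domain is mapped to a non-VWA vector. *)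

From HB Require Import structures.
From mathcomp Require Import all_boot all_order all_algebra.
From mathcomp Require Import all_classical all_reals all_analysis.
Set Implicit Arguments. Unset Strict Implicit. Unset Printing Implicit Defensive.
Import Order.TTheory GRing.Theory Num.Theory.
Local Open Scope ring_scope.
Local Open Scope classical_set_scope.

Definition supnormZ (R : realType) (k : nat) (q : 'rV[int]_k) : R :=
  \big[Num.max/0]_(i < k) `|(q 0 i)%:~R : R|.

Definition dotZ (R : realType) (k : nat) (y : 'rV[R]_k) (q : 'rV[int]_k) : R :=
  \sum_(i < k) y 0 i * (q 0 i)%:~R.

Definition W_set (R : realType) (k : nat) (v : R) (y : 'rV[R]_k) : Prop :=
  infinite_set [set q : 'rV[int]_k |
     exists p : int, `|dotZ y q + p%:~R| <= (supnormZ R q) `^ (- v)].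

Definition W_plus (R : realType) (k : nat) (v : R) (y : 'rV[R]_k) : Prop :=
  exists2 u : R, v < u & W_set u y.

Definition VWA (R : realType) (k : nat) (y : 'rV[R]_k) : Prop :=
  exists2 v : R, k%:R < v & W_set v y.

Definition extremal (R : realType) (k : nat) (f : R -> 'rV[R]_k) : Prop :=
  {ae (@lebesgue_measure R), forall x, ~ VWA (f x)}.

Definition line_map (R : realType) (m : nat) (b : 'rV[R]_m) (x : R)
  : 'rV[R]_(1 + m) := row_mx (\row_(i < 1) x) (x *: b).

From HB Require Import structures.
From mathcomp Require Import all_boot all_order all_algebra.
From mathcomp Require Import all_classical all_reals all_analysis.
From mathcomp Require Import zify ring lra.
Import Order.TTheory GRing.Theory Num.Theory.
Set Implicit Arguments. Unset Strict Implicit. Unset Printing Implicit Defensive.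
Local Open Scope ring_scope.

(* Write q = (q0, q') with q0 an integer and q' in Z^m, and L(q) = q0 + b q',
   so that (x, x b) q = x L(q). Since b is not in W^+_{1+m}, |L(q)| is at
   least about |q'|^-(1+m); together with |x L(q) + p| <= |q|^-v for some
   v > 1 + m this forces |L(q)| >= 1/(2N) once |q| is large and
   δ <= |x| <= N. Hence every such x lies, for infinitely many K, in the
   union over |q| <= 2^(K+1) of the intervals of length 2^(1-Kv)/|L(q)|
   around the points -p/L(q), of which there are O(N |L(q)|). That union has
   measure O(N (2^(1+m-v))^K), a summable sequence, so Borel-Cantelli shows
   that these x form a null set; letting δ -> 0, N -> oo and
   v -> 1 + m gives the theorem. *)

Section LineMapExtremal.
Variable R : realType.

Definition supnormn (k : nat) (q : 'rV[int]_k) : nat := \max_(i < k) absz (q ord0 i).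

Lemma supnormZE k (q : 'rV[int]_k) : supnormZ R q = (supnormn q)%:R.
Proof.
rewrite /supnormZ /supnormn; elim/big_rec2: _ => [//|i a c _ ->].
rewrite -intr_norm /= -[`|q ord0 i|%:~R]/((absz (q ord0 i))%:R : R).
rewrite /maxn; case: ltnP => h; first by rewrite max_r // ler_nat ltnW.
by rewrite max_l // ler_nat.
Qed.

Lemma leq_supnormn k (q : 'rV[int]_k) i : (absz (q ord0 i) <= supnormn q)%N.
Proof. exact: leq_bigmax. Qed.

Lemma supnormn_le k (q : 'rV[int]_k) M :
  (forall i, absz (q ord0 i) <= M)%N -> (supnormn q <= M)%N.
Proof. by move=> h; apply/bigmax_leqP => i _; apply: h. Qed.

Lemma supnormn_rsubmx m (q : 'rV[int]_(1 + m)) :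
  (supnormn (rsubmx q) <= supnormn q)%N.
Proof. by apply: supnormn_le => i; rewrite mxE; apply: leq_supnormn. Qed.

Lemma supnormn_row_mx m (q : 'rV[int]_(1 + m)) :
  (supnormn q <= maxn (absz (q ord0 (lshift m ord0))) (supnormn (rsubmx q)))%N.
Proof.
apply: supnormn_le => i; rewrite leq_max.
case: (split_ordP i) => j ->; first by rewrite (ord1 j) leqnn.
have -> : q ord0 (rshift 1 j) = rsubmx q ord0 j by rewrite mxE.
by rewrite leq_supnormn orbT.
Qed.

Lemma norm_dotZ_le k (y : 'rV[R]_k) (q : 'rV[int]_k) :
  `|dotZ y q| <= (\sum_i `|y 0 i|) * (supnormn q)%:R.
Proof.
rewrite /dotZ mulr_suml; apply: le_trans (ler_norm_sum _ _ _) _.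
apply: ler_sum => i _; rewrite normrM ler_wpM2l //.
by rewrite -intr_norm -[`|q ord0 i|%:~R]/((absz (q ord0 i))%:R : R) ler_nat leq_supnormn.
Qed.

Definition box_point k M (f : {ffun 'I_k -> 'I_(M.*2.+1)}) : 'rV[int]_k :=
  \row_i ((f i)%:Z - M%:Z).

Lemma box_pointP k M (q : 'rV[int]_k) : (supnormn q <= M)%N ->
  exists f : {ffun 'I_k -> 'I_(M.*2.+1)}, q = box_point f.
Proof.
move=> hq; exists [ffun i => inord (absz (q ord0 i + M%:Z))].
apply/rowP => i; rewrite /box_point mxE ffunE.
have hi := leq_trans (leq_supnormn q i) hq.
have hqM : (0 <= q ord0 i + M%:Z)%R.
  by move: hi; case: (q ord0 i) => a /=; rewrite ?NegzE; lia.
rewrite inordK; first by rewrite gez0_abs // addrK.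
by move: hi hqM; case: (q ord0 i) => a /=; rewrite ?NegzE; lia.
Qed.

Lemma finite_supnormn_le k M : finite_set [set q : 'rV[int]_k | (supnormn q <= M)%N].
Proof.
apply: (@sub_finite_set _ _ [set box_point f | f in [set: {ffun 'I_k -> 'I_(M.*2.+1)}]]).
  by move=> q /= /box_pointP [f ->]; exists f.
exact/finite_image/finite_finset.
Qed.

Definition linform m (b : 'rV[R]_m) (q : 'rV[int]_(1 + m)) : R :=
  (q ord0 (lshift m ord0))%:~R + dotZ b (rsubmx q).

Lemma dotZ_line_map m (b : 'rV[R]_m) x q :
  dotZ (line_map b x) q = x * linform b q.
Proof.
rewrite /dotZ /linform /line_map big_split_ord /= big_ord1 mulrDr mulr_sumr.
congr (_ + _); first by rewrite row_mxEl mxE.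
by apply: eq_bigr => i _; rewrite row_mxEr !mxE mulrA.
Qed.

Lemma supnormn_le_linform m (b : 'rV[R]_m) q :
  (supnormn q)%:R <=
    `|linform b q| + (\sum_i `|b 0 i| + 1) * (supnormn (rsubmx q))%:R.
Proof.
set L := linform b q; set B := \sum_i `|b 0 i|; set Q' := supnormn (rsubmx q).
have B0 : 0 <= B by apply: sumr_ge0.
have hq0 : (absz (q ord0 (lshift m ord0)))%:R <= `|L| + B * Q'%:R.
  have -> : (absz (q ord0 (lshift m ord0)))%:R = `|L - dotZ b (rsubmx q)|.
    by rewrite addrK -intr_norm.
  exact: le_trans (ler_normB _ _) (lerD (lexx _) (norm_dotZ_le _ _)).
have hQ' : B * Q'%:R <= (B + 1) * Q'%:R by rewrite ler_wpM2r ?lerDl.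
have := supnormn_row_mx q; rewrite leq_max -!(ler_nat R) => /orP[] hQ.
  exact: le_trans hQ (le_trans hq0 (lerD (lexx _) hQ')).
apply: le_trans hQ _; rewrite -[X in X <= _]add0r.
by apply: lerD; rewrite // ler_peMl // lerDr.
Qed.

Lemma exists_nat_gt (c : R) : exists M : nat, c < M%:R.
Proof. by exists (Num.truncn c).+1; apply: truncnS_gt. Qed.

Lemma ler_powRN (Q1 Q2 w : R) : 0 < Q1 -> Q1 <= Q2 -> 0 <= w ->
  Q2 `^ (- w) <= Q1 `^ (- w).
Proof.
move=> Q10 Q12 w0; have Q20 := lt_le_trans Q10 Q12.
rewrite !powRN lef_pV2 ?posrE ?powR_gt0 //.
by apply: ge0_ler_powR; rewrite // nnegrE ltW.
Qed.

Lemma natr_powRN_le_eventually (δ w : R) : 0 < δ -> 0 < w ->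
  exists M : nat, forall Q : nat, (M <= Q)%N -> Q%:R `^ (- w) <= δ.
Proof.
move=> δ0 w0; set T := δ^-1 `^ w^-1.
exists (Num.truncn T).+1 => Q hQ.
have T0 : 0 < T by rewrite powR_gt0 // invr_gt0.
have TQ : T < Q%:R by apply: lt_le_trans (truncnS_gt T) _; rewrite ler_nat.
have -> : δ = (T `^ w)^-1.
  by rewrite /T -powRrM mulVf ?gt_eqF // powRr1 ?invrK // ltW // invr_gt0.
rewrite powRN lef_pV2 ?posrE ?powR_gt0 ?invr_gt0 ?(lt_trans T0 TQ) //.
by apply: ge0_ler_powR; rewrite ?nnegrE ?ler0n //; apply: ltW.
Qed.

Lemma natr_powRN_le_half (Q : nat) (v : R) : (2 <= Q)%N -> 1 <= v ->
  Q%:R `^ (- v) <= 2^-1.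
Proof.
move=> Q2 v1; have Q0 : (0 < Q)%N by apply: leq_trans Q2.
apply: le_trans (_ : Q%:R `^ (-1) <= _).
  by apply: ler_powR; rewrite ?lerN2 // ler1n.
by rewrite powR_inv1 ?ler0n // lef_pV2 ?posrE ?ltr0n // ler_nat.
Qed.

Lemma int_eq0_near (a : R) (p : int) :
  `|a| < 2^-1 -> `|a + p%:~R| <= 2^-1 -> p = 0.
Proof.
move=> ha hap; have : `|p%:~R : R| < 1.
  rewrite -[p%:~R](addrK a) [_ + a]addrC.
  by apply: le_lt_trans (ler_normB _ _) _; rewrite [X in _ < X](splitr 1) mul1r ler_ltD.
by rewrite -intr_norm ltrz1; case: p {hap} => [[|a']|a'].
Qed.

Lemma not_W_set_lower_bound k u (y : 'rV[R]_k) : ~ W_set u y ->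
  exists M : nat, forall q, (M < supnormn q)%N -> forall p : int,
    (supnormn q)%:R `^ (- u) < `|dotZ y q + p%:~R|.
Proof.
move=> /contrapT /finite_fsetP [X hX].
exists (\max_(q <- finmap.enum_fset X) supnormn q) => q hq p.
rewrite ltNge; apply/negP => hle.
have : [set q | exists p : int,
    `|dotZ y q + p%:~R| <= supnormZ R q `^ (- u)]%classic q.
  by exists p; rewrite supnormZE.
rewrite hX /= => /(@leq_bigmax_seq _ _ xpredT (@supnormn k) q) /(_ isT).
by rewrite leqNgt hq.
Qed.

Section LinformLowerBound.
Variables (m : nat) (b : 'rV[R]_m).
Hypothesis hb : ~ W_plus (1 + m)%:R b.

(* Pass through an exponent u between 1 + m and v: the factor Q^(u - v) then
   absorbs the constant δ. *)
Lemma dotZ_int_away (v δ : R) : (1 + m)%:R < v -> 0 < δ ->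
  exists M : nat, forall q' : 'rV[int]_m, (M < supnormn q')%N -> forall p : int,
    (supnormn q')%:R `^ (- v) < δ * `|dotZ b q' + p%:~R|.
Proof.
move=> mv δ0; set u := ((1 + m)%:R + v) / 2.
have [mu uv] := midf_lt mv.
have [M1 hM1] : exists M1 : nat, forall q', (M1 < supnormn q')%N -> forall p : int,
    (supnormn q')%:R `^ (- u) < `|dotZ b q' + p%:~R|.
  by apply: not_W_set_lower_bound => hW; apply: hb; exists u.
have [M2 hM2] : exists M2 : nat, forall Q : nat, (M2 <= Q)%N ->
    Q%:R `^ (- (v - u)) <= δ.
  by apply: natr_powRN_le_eventually; rewrite ?subr_gt0.
exists (maxn M1 M2) => q' hq' p.
have q'0 : (supnormn q')%:R != 0 :> R by rewrite pnatr_eq0 -lt0n (leq_ltn_trans _ hq').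
move: hq'; rewrite gtn_max => /andP[/hM1 /(_ p) hu /ltnW /hM2 hvu].
have -> : (supnormn q')%:R `^ (- v) =
    (supnormn q')%:R `^ (- u) * (supnormn q')%:R `^ (- (v - u)).
  rewrite -powRD; first by congr (_ `^ _); ring.
  by rewrite q'0 implybT.
apply: le_lt_trans (ler_wpM2l (powR_ge0 _ _) hvu) _.
by rewrite mulrC ltr_pM2l.
Qed.

Lemma linform_ge (v δ N : R) : (1 + m)%:R < v -> 0 < δ -> 0 < N ->
  exists Q0 : nat, forall q, (Q0 <= supnormn q)%N -> forall (x : R) (p : int),
    δ <= `|x| -> `|x| <= N ->
    `|x * linform b q + p%:~R| <= (supnormn q)%:R `^ (- v) ->
    (N *+ 2)^-1 <= `|linform b q|.
Proof.
move=> mv δ0 N0; have [M hM] := dotZ_int_away mv δ0.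
set c := (N *+ 2)^-1; set B := \sum_i `|b 0 i|.
have [Q1 hQ1] := exists_nat_gt (c + (B + 1) * M%:R).
exists (maxn 2 Q1) => q; rewrite geq_max => /andP[hQ2 hQ1Q] x p hx1 hx2 happ.
rewrite leNgt; apply/negP => hL.
set L := linform b q in hL happ; set q' := rsubmx q.
have hq' : (M < supnormn q')%N.
  rewrite ltnNge; apply/negP => hq'M; move: hQ1; rewrite ltNge => /negP; apply.
  rewrite -(ler_nat R) in hQ1Q; apply: le_trans hQ1Q _.
  apply: le_trans (supnormn_le_linform b q) _.
  by apply: lerD (ltW hL) _; rewrite ler_wpM2l ?ler_nat // addr_ge0 ?sumr_ge0.
have hxL : `|x * L| < 2^-1.
  rewrite normrM; apply: le_lt_trans (ler_wpM2r (normr_ge0 _) hx2) _.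
  have -> : (2^-1 : R) = N * c by rewrite /c -mulr_natr; field; rewrite gt_eqF.
  by rewrite ltr_pM2l.
(* Now p = 0, so δ |L| <= |q|^-v <= |q'|^-v, against dotZ_int_away. *)
have v1 : 1 <= v by apply: le_trans (ltW mv); rewrite ler1n.
have p0 := int_eq0_near hxL (le_trans happ (natr_powRN_le_half hQ2 v1)).
move: happ; rewrite p0 addr0 normrM => happ.
have := hM q' hq' (q ord0 (lshift m ord0)); rewrite addrC -/L.
apply/negP; rewrite -leNgt; apply: le_trans (ler_wpM2r (normr_ge0 _) hx1) _.
apply: le_trans happ _; apply: ler_powRN; rewrite ?ler_nat ?supnormn_rsubmx //.
  by rewrite ltr0n (leq_ltn_trans _ hq').
by apply: le_trans v1.
Qed.

End LinformLowerBound.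

Local Open Scope classical_set_scope.

Lemma bigsetU_fin_sup (I : finType) (T : Type) (F : I -> set T) i :
  F i `<=` \big[setU/set0]_(j : I) F j.
Proof. by rewrite -big_enum -bigcup_seq; apply: bigcup_sup; rewrite /= mem_enum. Qed.

Lemma measure_bigsetU_card_le d (T : measurableType d)
    (mu : {measure set T -> \bar R}) (I : finType) (F : I -> set T) (c : R) :
  (forall i, measurable (F i)) -> (forall i, (mu (F i) <= c%:E)%E) ->
  (mu (\big[setU/set0]_(i : I) F i) <= (#|I|%:R * c)%:E)%E.
Proof.
move=> mF hF; rewrite -big_enum cardE.
elim: (enum I) => [|i s IH] /=; first by rewrite big_nil measure0 mul0r.
rewrite big_cons -addn1 natrD mulrDl mul1r EFinD addeC.
apply: le_trans (measureU2 mu (mF i) _) (leeD (hF i) IH).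
exact: bigsetU_measurable.
Qed.

(* approx_level K contains every x with |x| <= N and
   |x * linform b q + p| <= 2^(-K v) for some integer p and some q with
   |q| <= 2^(K+1) and |linform b q| >= 1/(2N). *)
Section ApproxCover.
Variables (m : nat) (b : 'rV[R]_m) (v N : R).
Hypotheses (v0 : 0 < v) (N0 : 0 < N).

Definition radius (K : nat) : R := (2 ^ K)%N%:R `^ (- v).

(* Only the integers p with |p| <= int_range q + 1 can satisfy
   |x * linform b q + p| <= 1 when |x| <= N. *)
Definition int_range q : nat := Num.truncn (N * `|linform b q|).

Definition approx_ball K q (i : nat) : set R :=
  closed_ball (- (i%:Z - (int_range q).+1%:Z)%:~R / linform b q)
              (radius K / `|linform b q|).

Definition approx_cell K q : set R :=
  if (N *+ 2)^-1 <= `|linform b q|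
  then \big[setU/set0]_(i < (int_range q).*2.+3) approx_ball K q i
  else set0.

Definition approx_level K : set R :=
  \big[setU/set0]_(f : {ffun 'I_(1 + m) -> 'I_((2 ^ K.+1).*2.+1)})
     approx_cell K (box_point f).

Lemma radius_gt0 K : 0 < radius K.
Proof. by rewrite powR_gt0 // ltr0n expn_gt0. Qed.

Lemma radiusE K : radius K = (2 `^ (- v)) ^+ K.
Proof. by rewrite /radius natrX -powR_mulrn // -powRrM mulrC powRrM powR_mulrn. Qed.

Lemma measurable_approx_cell K q : measurable (approx_cell K q).
Proof.
rewrite /approx_cell; case: ifP => // _.
by apply: bigsetU_measurable => i _; apply: measurable_realfun.measurable_closed_ball.
Qed.

Lemma measurable_approx_level K : measurable (approx_level K).
Proof. by apply: bigsetU_measurable => f _; apply: measurable_approx_cell. Qed.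

Lemma approx_cell_measure_le K q :
  (lebesgue_measure (approx_cell K q) <= (16 * N * radius K)%:E)%E.
Proof.
have r0 := radius_gt0 K.
rewrite /approx_cell; case: ifP => hL; last first.
  by rewrite measure0 lee_fin !mulr_ge0 // ltW.
set L := `|linform b q| in hL *.
have L0 : 0 < L by apply: lt_le_trans hL; rewrite invr_gt0 mulrn_wgt0.
apply: le_trans (measure_bigsetU_card_le (T := measurableTypeR R)
  (mu := lebesgue_measure) (c := radius K / L *+ 2) _ _) _.
- by move=> i; apply: measurable_realfun.measurable_closed_ball.
- by move=> i; rewrite /= /approx_ball lebesgue_measure_closed_ball // divr_ge0 // ltW.
rewrite /= card_ord lee_fin.
have ht : (int_range q)%:R / L <= N.
  rewrite ler_pdivrMr //.
  by have /andP[] := truncn_itv (mulr_ge0 (ltW N0) (normr_ge0 (linform b q))).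
have hinv : L^-1 <= N *+ 2.
  by rewrite -[X in _ <= X]invrK lef_pV2 ?posrE ?invr_gt0 ?mulrn_wgt0.
set t := (int_range q)%:R in ht.
have -> : ((int_range q).*2.+3)%:R * (radius K / L *+ 2) =
    4 * (t / L) * radius K + 6 * radius K * L^-1.
  by rewrite -addn3 -muln2 natrD natrM /t; field; rewrite gt_eqF.
apply: le_trans (lerD (ler_wpM2r (ltW r0) (ler_wpM2l _ ht))
                      (ler_wpM2l _ hinv)) _; rewrite ?mulr_ge0 ?(ltW r0) //.
by rewrite -mulr_natr (_ : _ + _ = 16 * N * radius K) //; ring.
Qed.

Definition level_ratio : R := (2 ^ (1 + m))%:R * 2 `^ (- v).

Lemma approx_level_measure_le K :
  (lebesgue_measure (approx_level K) <=
    ((8 ^ (1 + m))%:R * 16 * N * level_ratio ^+ K)%:E)%E.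
Proof.
apply: le_trans (measure_bigsetU_card_le (T := measurableTypeR R)
  (mu := lebesgue_measure) (c := 16 * N * radius K) _ _) _.
- by move=> f; apply: measurable_approx_cell.
- by move=> f /=; apply: approx_cell_measure_le.
rewrite /= lee_fin card_ffun !card_ord.
have hcard : ((2 ^ K.+1).*2.+1 ^ (1 + m) <= 8 ^ (1 + m) * (2 ^ (1 + m)) ^ K)%N.
  rewrite [X in (_ <= _ * X)%N]expnAC -expnMn leq_exp2r // expnS.
  by rewrite -mul2n mulnA ltn_pmul2r ?expn_gt0.
apply: le_trans (ler_wpM2r _ (_ : _ <= (8 ^ (1 + m) * (2 ^ (1 + m)) ^ K)%:R)) _.
- by rewrite !mulr_ge0 ?ltW ?radius_gt0.
- by rewrite ler_nat.
rewrite /level_ratio exprMn radiusE natrM !natrX.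
by rewrite le_eqVlt; apply/orP; left; apply/eqP; ring.
Qed.

Lemma level_ratio_gt0 : 0 < level_ratio.
Proof. by rewrite mulr_gt0 ?powR_gt0 // ltr0n expn_gt0. Qed.

Lemma level_ratio_lt1 : (1 + m)%:R < v -> level_ratio < 1.
Proof.
move=> mv; have -> : level_ratio = 2 `^ ((1 + m)%:R - v).
  by rewrite /level_ratio natrX -powR_mulrn // -powRD // pnatr_eq0 implybT.
have e0 : (1 + m)%:R - v < 0 by rewrite subr_lt0.
rewrite lt_neqAle powR_eq1 !negb_or (lt_eqF e0) pnatr_eq1 ltNge ler0n /=.
by rewrite -[X in _ <= X](powRr0 2); apply: ler_powR; rewrite ?ler1n // ltW.
Qed.

Lemma approx_level_summable : (1 + m)%:R < v ->
  (\sum_(0 <= K <oo) lebesgue_measure (approx_level K) < +oo)%E.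
Proof.
move=> mv; have r0 := level_ratio_gt0; have r1 := level_ratio_lt1 mv.
set a := (8 ^ (1 + m))%:R * 16 * N.
have a0 : 0 <= a by rewrite !mulr_ge0 // ltW.
apply: (@le_lt_trans _ _ ((a / (1 - level_ratio))%:E)); last exact: ltry.
apply: le_trans (_ : \sum_(0 <= K <oo) ((a * level_ratio ^+ K)%:E) <= _)%E.
  apply: lee_nneseries => [K _ _|K _]; first exact: measure_ge0.
  exact: approx_level_measure_le.
apply: lime_le.
  by apply: is_cvg_nneseries => K _ _; rewrite lee_fin mulr_ge0 // exprn_ge0 // ltW.
apply: nearW => n; rewrite sumEFin lee_fin.
have hr : `|level_ratio| < 1 by rewrite ger0_norm // ltW.
by have := geometric_le_lim n a0 r0 hr; rewrite seriesEnat.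
Qed.

Lemma approx_cell_mem K q (x : R) (p : int) :
  (2 ^ K <= supnormn q)%N -> `|x| <= N -> (N *+ 2)^-1 <= `|linform b q| ->
  `|x * linform b q + p%:~R| <= (supnormn q)%:R `^ (- v) -> approx_cell K q x.
Proof.
move=> hKq hx hL happ; rewrite /approx_cell hL.
set L := linform b q in hL happ *; set t := int_range q.
have L0 : 0 < `|L| by apply: lt_le_trans hL; rewrite invr_gt0 mulrn_wgt0.
have q1 : (1 <= supnormn q)%N by apply: leq_trans hKq; rewrite expn_gt0.
have happ1 : `|x * L + p%:~R| <= 1.
  apply: le_trans happ (le_trans (ler_powRN ltr01 _ (ltW v0)) _).
    by rewrite ler1n.
  by rewrite powR1.
have hp : `|p| < t.+2 :> int.
  rewrite -(ltr_int R) intr_norm -[p%:~R](addrK (x * L)) [_ + x * L]addrC.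
  apply: le_lt_trans (ler_normB _ _) _.
  rewrite -[(t.+2)%:~R]/((1 + t.+1)%:R : R) natrD ler_ltD // normrM.
  by apply: le_lt_trans (ler_wpM2r (normr_ge0 _) hx) _; apply: truncnS_gt.
have [i hi ep] : exists2 i, (i < t.*2.+3)%N & p = i%:Z - (t.+1)%:Z.
  by exists (absz (p + (t.+1)%:Z)); move: hp; clear; lia.
apply: (bigsetU_sup hi); rewrite /approx_ball -/t -ep -/L.
rewrite closed_ballE ?divr_gt0 ?radius_gt0 // /closed_ball_ /=.
have -> : - p%:~R / L - x = - ((x * L + p%:~R) / L).
  by field; rewrite -normr_eq0 gt_eqF.
rewrite normrN normrM normfV ler_wpM2r ?invr_ge0 //.
apply: le_trans happ (ler_powRN _ _ (ltW v0)); rewrite ?ler_nat // ltr0n expn_gt0.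
Qed.

Lemma approx_level_sup K q : (supnormn q <= 2 ^ K.+1)%N ->
  approx_cell K q `<=` approx_level K.
Proof. by move=> /box_pointP [f ->]; apply: bigsetU_fin_sup. Qed.

End ApproxCover.

Lemma W_set_le k (v v' : R) (y : 'rV[R]_k) :
  0 < v' -> v' <= v -> W_set v y -> W_set v' y.
Proof.
move=> v'0 v'v hW fin; apply: hW; apply: sub_finite_set fin => q [p hp].
exists p; apply: le_trans hp _; rewrite supnormZE.
have [->|q0] := eqVneq (supnormn q) 0%N.
  by rewrite !powR0 // oppr_eq0 gt_eqF // (lt_le_trans v'0).
by apply: ler_powR; rewrite ?ler1n ?lt0n ?lerN2.
Qed.

Section NotWPlusLine.
Variables (m : nat) (b : 'rV[R]_m).
Hypothesis hb : ~ W_plus (1 + m)%:R b.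

Lemma W_set_band_sub_lim_sup (v δ N : R) : (1 + m)%:R < v -> 0 < δ -> 0 < N ->
  [set x | δ <= `|x| <= N /\ W_set v (line_map b x)] `<=`
  lim_sup_set (approx_level b v N).
Proof.
move=> mv δ0 N0 x [/andP[hx1 hx2] hW] n0 _.
have v0 : 0 < v by apply: le_lt_trans mv.
have [Q0 hQ0] := linform_ge hb mv δ0 N0.
have [q [p hp] hqM] : exists2 q : 'rV[int]_(1 + m), (exists p : int,
    `|dotZ (line_map b x) q + p%:~R| <= supnormZ R q `^ (- v)) &
    (maxn Q0 (2 ^ n0) < supnormn q)%N.
  apply: contrapT => hno; apply: hW.
  apply: sub_finite_set (finite_supnormn_le _ (maxn Q0 (2 ^ n0))) => q hq /=.
  by rewrite leqNgt; apply/negP => hlt; apply: hno; exists q.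
rewrite dotZ_line_map supnormZE in hp.
move: hqM; rewrite gtn_max => /andP[/ltnW hQ0q hn0q].
have q0 : (0 < supnormn q)%N by apply: leq_ltn_trans hn0q.
have /andP[hK1 hK2] := trunc_log_bounds (isT : (1 < 2)%N) q0.
exists (trunc_log 2 (supnormn q)); first by apply: trunc_log_max => //; apply: ltnW.
apply: (approx_level_sup (ltnW hK2)).
exact: (approx_cell_mem v0 N0 hK1 hx2 (hQ0 q hQ0q x p hx1 hx2 hp) hp).
Qed.

Lemma negligible_W_set_band (v δ N : R) : (1 + m)%:R < v -> 0 < δ -> 0 < N ->
  lebesgue_measure.-negligible [set x | δ <= `|x| <= N /\ W_set v (line_map b x)].
Proof.
move=> mv δ0 N0; have v0 : 0 < v by apply: le_lt_trans mv.
exists (lim_sup_set (approx_level b v N)); split.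
- apply: bigcap_measurable => // k _; apply: bigcup_measurable => j _.
  exact: measurable_approx_level.
- apply: lim_sup_set_cvg0; first exact: measurable_approx_level.
  exact: approx_level_summable.
- exact: W_set_band_sub_lim_sup.
Qed.

Definition VWA_band (j : nat) : set R :=
  [set x | (j.+1%:R)^-1 <= `|x| <= j.+1%:R /\
           W_set ((1 + m)%:R + (j.+1%:R)^-1) (line_map b x)].

Lemma VWA_line_map_band x : x != 0 -> VWA (line_map b x) ->
  exists j, VWA_band j x.
Proof.
move=> x0 [v mv hW]; have ax : 0 < `|x| by rewrite normr_gt0.
have vm : 0 < v - (1 + m)%:R by rewrite subr_gt0.
have [j hj] := exists_nat_gt (Num.max `|x|^-1 (Num.max `|x| (v - (1 + m)%:R)^-1)).
rewrite !gt_max in hj; case/and3P: hj => h1 h2 h3.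
have hjS : j%:R <= j.+1%:R :> R by rewrite ler_nat.
have hjinv (c : R) : 0 < c -> c^-1 < j%:R -> (j.+1%:R)^-1 <= c.
  move=> c0 hc; rewrite -[X in _ <= X]invrK lef_pV2 ?posrE ?invr_gt0 ?ltr0n //.
  exact: le_trans (ltW hc) hjS.
exists j; split; first by rewrite hjinv //= (le_trans (ltW h2)).
apply: W_set_le hW; first by rewrite addr_gt0 ?invr_gt0 ?ltr0n.
by rewrite -lerBrDl hjinv.
Qed.

Lemma extremal_line_map : extremal (line_map b).
Proof.
suff : lebesgue_measure.-negligible ([set 0] `|` \bigcup_j VWA_band j).
  apply: negligibleS => x /= /contrapT hx; have [->|x0] := eqVneq x 0; first by left.
  by have [j hj] := VWA_line_map_band x0 hx; right; exists j.
apply: negligibleU.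
  by apply/negligibleP; [exact: measurable_set1 | exact: lebesgue_measure_set1].
apply: negligible_bigcup => j; apply: negligible_W_set_band.
- by rewrite ltrDl invr_gt0 ltr0n.
- by rewrite invr_gt0 ltr0n.
- by rewrite ltr0n.
Qed.

End NotWPlusLine.

End LineMapExtremal.

Theorem proposition4p7 (R : realType) (n : nat) (hn : (2 <= n)%N)
  (b : 'rV[R]_(n - 1)) (hb : ~ W_plus n%:R b) :
  extremal (line_map b).
Proof.
apply: extremal_line_map.
by rewrite addnC subnK // ltnW.
Qed.
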